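(* $R_3(L) \le 2593$. That is, for every coloring of the lattice grid $[2593]\times[2593]$ with 3 colors there exist integers $i,j$ and $t\ge 1$ such that the three points $(i,j)$, $(i,j+t)$, $(i+t,j+t)$ all lie in the grid and all receive the same color.
   Context: For $n\in\mathbb{N}$, $[n]=\{1,\dots,n\}$. An $L$ in the grid $[n]\times[n]$ is a set of three lattice points of the form $\{(i,j),(i,j+t),(i+t,j+t)\}$ with $t$ a positive integer (an isosceles right triangle). A $c$-coloring of the grid is a function $[n]\times[n]\to[c]$. $R_c(L)$ denotes the least $n$ such that every $c$-coloring of $[n]\times[n]$ contains a monochromatic $L$. *)

From mathcomp Require Import all_boot.

(* The grid [n] x [n] = {1..n} x {1..n}.  A c-coloring is modeled as a
   function nat -> nat -> 'I_c; only its values on the grid matter. *)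
Definition in_grid (n i j : nat) : Prop := 1 <= i <= n /\ 1 <= j <= n.

Definition has_mono_L (n c : nat) (col : nat -> nat -> 'I_c) : Prop :=
  exists i j t : nat,
    1 <= t /\
    in_grid n i j /\ in_grid n i (j + t) /\ in_grid n (i + t) (j + t) /\
    col i j = col i (j + t) /\ col i (j + t) = col (i + t) (j + t).

From mathcomp Require Import all_boot zify.
From Stdlib Require Import Classical.

Set Implicit Arguments.
Unset Strict Implicit.
Unset Printing Implicit Defensive.

(* In every window of four consecutive cells (1, b), ..., (1, b + 3) of the first row two
   cells (1, b + p), (1, b + q) share a colour c1, and the cell (1 + q - p, b + q)
   completing them to an L has another colour c2.  This gives each of the 2590 windows
   one of 36 types, so some type occurs at 72 windows.  Some gap between these 72
   positions occurs twice, at x < x + e and y < y + e: otherwise the 141 gaps between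
   positions at distance one or two in the sorted order would be distinct and sum to at
   least 141 * 142 / 2, while they sum to at most 3 * 2589.  For four windows x, x + e,
   y, y + e of the same type the cells (1 + q - p + e, x + e + q),
   (1 + q - p + e, y + e + q) and (1 + q - p + e + y - x, y + e + q) avoid both c1 and
   c2, so they form an L in the third colour. *)

Lemma sorted_ltn_sumn_lb (s : seq nat) k :
  sorted ltn s -> all (fun x => k < x) s -> size s * (2 * k + 1 + size s) <= 2 * sumn s.
Proof.
elim: s k => [|x s IH] k //= sorted_xs /andP[lt_kx _].
have := IH x (path_sorted sorted_xs) (order_path_min ltn_trans sorted_xs).
nia.
Qed.

Lemma uniq_pos_sumn_lb (s : seq nat) :
  uniq s -> 0 \notin s -> size s * (size s).+1 <= 2 * sumn s.
Proof.
move=> uniq_s s_pos; have perm_s : perm_eq (sort leq s) s by rewrite perm_sort.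
rewrite -(perm_size perm_s) -(perm_sumn perm_s).
have := @sorted_ltn_sumn_lb (sort leq s) 0; rewrite muln0 add0n add1n; apply.
  by rewrite ltn_sorted_uniq_leq (perm_uniq perm_s) uniq_s (sort_sorted leq_total).
apply/allP => x; rewrite (perm_mem perm_s) lt0n; apply: contraTneq => ->.
exact: s_pos.
Qed.

Lemma count_in_leq (T : eqType) (S : seq T) (f : nat -> T) (s : seq nat) k :
  {in S, forall v, count (fun x => f x == v) s <= k} ->
  count (fun x => f x \in S) s <= size S * k.
Proof.
elim: S => [|v S IH] small_fibres /=.
  by rewrite (eq_count (a2 := pred0)) ?count_pred0.
rewrite (eq_count (a2 := predU (fun x => f x == v) (fun x => f x \in S))); last first.
  by move=> x; rewrite /= inE.
have := count_predUI (fun x => f x == v) (fun x => f x \in S) s.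
have := small_fibres v (mem_head _ _).
rewrite mulSn; have := IH (fun w S_w => small_fibres w (@mem_behead _ (v :: S) w S_w)).
lia.
Qed.

Lemma pigeonhole_count (T : eqType) (S : seq T) (f : nat -> T) (s : seq nat) k :
  {in s, forall x, f x \in S} -> size S * k < size s ->
  exists2 v, v \in S & k < count (fun x => f x == v) s.
Proof.
move=> f_in_S many; case: (boolP (has (fun v => k < count (fun x => f x == v) s) S)).
  by case/hasP=> v; exists v.
move/hasPn => small_fibres; suff: size s <= size S * k by rewrite leqNgt many.
rewrite -count_predT -(eq_in_count (a1 := fun x => f x \in S)) //.
by apply: count_in_leq => v /small_fibres; rewrite -leqNgt.
Qed.

Section IncreasingGaps.

Variables (a : nat -> nat) (m : nat).
Hypothesis a_incr : forall i, i <= m -> a i < a i.+1.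

Lemma incr_lt i j : i < j -> j <= m.+1 -> a i < a j.
Proof.
elim: j => // j IH; rewrite ltnS leq_eqVlt => /predU1P[-> | lt_ij] lt_jm.
  exact: a_incr.
exact: ltn_trans (IH lt_ij (ltnW lt_jm)) (a_incr lt_jm).
Qed.

Definition gap_pairs : seq (nat * nat) :=
  [seq (i, i.+1) | i <- iota 0 m.+1] ++ [seq (i, i.+2) | i <- iota 0 m].

Definition gap (pr : nat * nat) : nat := a pr.2 - a pr.1.

Lemma mem_gap_pairs pr : pr \in gap_pairs -> pr.1 < pr.2 <= m.+1.
Proof.
by rewrite mem_cat => /orP[] /mapP[i]; rewrite mem_iota => /andP[_ lt_im] -> /=; lia.
Qed.

Lemma uniq_gap_pairs : uniq gap_pairs.
Proof.
rewrite cat_uniq !map_inj_uniq ?iota_uniq ?andbT; try by move=> i j [].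
by apply/hasPn => _ /mapP[i _ ->]; apply/negP => /mapP[j _ [-> /eqP]]; rewrite gtn_eqF.
Qed.

Lemma sum_gaps_le : \sum_(pr <- gap_pairs) gap pr <= 3 * (a m.+1 - a 0).
Proof.
have a_le i : i <= m -> a i <= a i.+1 by move/a_incr/ltnW.
have tele1 : \sum_(0 <= i < m.+1) (a i.+1 - a i) = a m.+1 - a 0.
  by apply: telescope_sumn_in => // i /andP[_]; apply: a_le.
have tele2 : \sum_(0 <= i < m) (a i.+1 - a i) = a m - a 0.
  by apply: telescope_sumn_in => // i /andP[_ /ltnW]; apply: a_le.
have tele3 : \sum_(0 <= i < m) (a i.+2 - a i.+1) = a m.+1 - a 1.
  by apply: (@telescope_sumn_in 0 m (fun k => a k.+1)) => // i /andP[_]; apply: a_le.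
have iotaE k : iota 0 k = index_iota 0 k by rewrite /index_iota subn0.
rewrite big_cat !big_map !iotaE /gap /= tele1.
have -> : \sum_(0 <= i < m) (a i.+2 - a i) = (a m.+1 - a 1) + (a m - a 0).
  rewrite -tele2 -tele3 -big_split /=; apply: eq_big_nat => i /andP[_ lt_im].
  by have := a_le i (ltnW lt_im); have := a_le i.+1 lt_im; lia.
by have := a_le 0 (leq0n m); have := a_le m (leqnn m); have := incr_lt (ltn0Sn m) (leqnn _); lia.
Qed.

Lemma gap_pos pr : pr \in gap_pairs -> 0 < gap pr.
Proof. by case/mem_gap_pairs/andP => lt_pr le_pr; rewrite subn_gt0 incr_lt. Qed.

Lemma gaps_not_uniq :
  3 * (a m.+1 - a 0) < m.+1 * m.*2.+1 -> ~~ uniq (map gap gap_pairs).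
Proof.
move=> small_span; apply/negP => /uniq_pos_sumn_lb.
have -> : 0 \notin map gap gap_pairs.
  by apply/negP => /mapP[pr /gap_pos pos eq0]; rewrite -eq0 in pos.
rewrite size_map size_cat !size_map !size_iota sumnE big_map => /(_ isT).
by have := sum_gaps_le; nia.
Qed.

Lemma equal_gaps_fst_neq pr pr' : pr \in gap_pairs -> pr' \in gap_pairs ->
  pr != pr' -> gap pr = gap pr' -> pr.1 != pr'.1.
Proof.
case: pr pr' => [i j] [i' j'].
move=> /mem_gap_pairs/= /andP[lt_ij le_j] /mem_gap_pairs/= /andP[lt_ij' le_j'].
rewrite /gap /= => neq_pr eq_gap; apply: contraNneq neq_pr => eq_i; subst i'.
have := incr_lt lt_ij le_j; have := incr_lt lt_ij' le_j'.
case: (ltngtP j j') => [lt_jj' | lt_j'j | -> //].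
  by have := incr_lt lt_jj' le_j'; lia.
by have := incr_lt lt_j'j le_j; lia.
Qed.

Lemma increasing_equal_gaps : 3 * (a m.+1 - a 0) < m.+1 * m.*2.+1 ->
  exists i j i' j', [/\ i < i', i < j <= m.+1, i' < j' <= m.+1 & a j - a i = a j' - a i'].
Proof.
move/gaps_not_uniq/(uniqPn 0) => [k [l [lt_kl]]]; rewrite size_map => lt_l.
have lt_k := ltn_trans lt_kl lt_l.
rewrite !(nth_map (0, 0)) //; set pr := nth _ _ k; set pr' := nth _ _ l => eq_gap.
have in_pr : pr \in gap_pairs by apply: mem_nth.
have in_pr' : pr' \in gap_pairs by apply: mem_nth.
have neq_pr : pr != pr' by rewrite nth_uniq ?uniq_gap_pairs // ltn_eqF.
have := equal_gaps_fst_neq in_pr in_pr' neq_pr eq_gap.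
move: in_pr in_pr' eq_gap; rewrite /gap; clear neq_pr; clearbody pr pr'.
case: pr pr' => [i j] [i' j'] /mem_gap_pairs/= lt_j /mem_gap_pairs/= lt_j' eq_gap.
case: ltngtP => // [lt_i | lt_i'] _; first by exists i, j, i', j'.
by exists i', j', i, j.
Qed.

End IncreasingGaps.

Lemma sorted_equal_gaps (s : seq nat) N m :
  sorted ltn s -> m.+2 <= size s -> all (fun x => x < N) s -> 3 * N <= m.+1 * m.*2.+1 ->
  exists x y e, [/\ x < y, 0 < e & {subset [:: x; x + e; y; y + e] <= s}].
Proof.
move=> sorted_s long_s /allP lt_sN span; pose a := nth 0 s.
have a_incr i : i <= m -> a i < a i.+1.
  by move=> le_im; apply: (sorted_ltn_nth ltn_trans) => //; rewrite inE; lia.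
have a_in i : i <= m.+1 -> a i \in s.
  by move=> le_i; apply: mem_nth; apply: leq_ltn_trans le_i long_s.
have [|i [j [i' [j' [lt_ii' /andP[lt_ij le_j] /andP[lt_ij' le_j'] eq_gap]]]]] :=
  increasing_equal_gaps a_incr.
  by have := lt_sN _ (a_in m.+1 (leqnn _)); lia.
have le_i : i <= m.+1 := ltnW (leq_trans lt_ij le_j).
have le_i' : i' <= m.+1 := ltnW (leq_trans lt_ij' le_j').
have lt_aij := incr_lt a_incr lt_ij le_j; have lt_aij' := incr_lt a_incr lt_ij' le_j'.
exists (a i), (a i'), (a j - a i); split.
- by have := incr_lt a_incr lt_ii' le_i'.
- by rewrite subn_gt0.
- move=> x; rewrite !inE (subnKC (ltnW lt_aij)) eq_gap (subnKC (ltnW lt_aij')).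
  by case/or4P => /eqP ->; apply: a_in.
Qed.

Lemma fibre_equal_gaps (T : eqType) (S : seq T) (f : nat -> T) N m :
  {in iota 0 N, forall b, f b \in S} -> size S * m.+1 < N -> 3 * N <= m.+1 * m.*2.+1 ->
  exists x y e, [/\ x < y, 0 < e, y + e < N &
                 [/\ f (x + e) = f x, f y = f x & f (y + e) = f x]].
Proof.
move=> f_in_S many span.
rewrite -[N in _ < N](size_iota 0) in many.
have [v _ many_v] := pigeonhole_count f_in_S many.
pose B := [seq b <- iota 0 N | f b == v].
have B_spec b : b \in B -> b < N /\ f b = v.
  by rewrite mem_filter mem_iota => /andP[/eqP -> /andP[_ lt_bN]].
have sorted_B : sorted ltn B := sorted_filter ltn_trans _ (iota_ltn_sorted 0 N).
have long_B : m.+2 <= size B by rewrite size_filter.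
have lt_BN : all (fun b => b < N) B by apply/allP => b /B_spec[].
have [x [y [e [lt_xy e_gt0 sub_B]]]] := sorted_equal_gaps sorted_B long_B lt_BN span.
have /B_spec[_ fx] := sub_B x (mem_head _ _).
have /B_spec[_ fxe] : x + e \in B by apply: sub_B; rewrite !inE eqxx orbT.
have /B_spec[_ fy] : y \in B by apply: sub_B; rewrite !inE eqxx !orbT.
have /B_spec[lt_yeN fye] : y + e \in B by apply: sub_B; rewrite !inE eqxx !orbT.
by exists x, y, e; split; rewrite // fx fxe fy fye.
Qed.

Lemma ord3_eq_third (x y z w : 'I_3) :
  x != y -> z != x -> z != y -> w != x -> w != y -> z = w.
Proof. by move: x y z w; do 4!case=> [[|[|[|//]]] ?]; move=> *; apply/val_inj. Qed.

Definition equal_pair (g : nat -> 'I_3) : nat * nat :=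
  if [pick pq : 'I_4 * 'I_4 | (pq.1 < pq.2) && (g pq.1 == g pq.2)] is Some (p, q)
  then (val p, val q) else (0, 0).

Lemma equal_pairP (g : nat -> 'I_3) :
  (equal_pair g).1 < (equal_pair g).2 <= 3 /\ g (equal_pair g).1 = g (equal_pair g).2.
Proof.
rewrite /equal_pair; case: pickP => [[p q] /andP[lt_pq /eqP eq_g] | no_pair].
  by rewrite /= lt_pq -ltnS ltn_ord.
have : ~~ injectiveb (fun k : 'I_4 => g k).
  by apply/negP => /injectiveP/leq_card; rewrite !card_ord.
case/injectivePn => x [y neq_xy eq_xy]; exfalso.
case: (ltngtP x y) => [lt_xy | lt_yx | /val_inj eq_xy']; last by rewrite eq_xy' eqxx in neq_xy.
  by have := no_pair (x, y); rewrite /= lt_xy eq_xy eqxx.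
by have := no_pair (y, x); rewrite /= lt_yx eq_xy eqxx.
Qed.

Definition colours : seq 'I_3 := [:: @Ordinal 3 0 isT; @Ordinal 3 1 isT; @Ordinal 3 2 isT].

Lemma mem_colours (c : 'I_3) : c \in colours.
Proof. by case: c => [[|[|[|//]]] ?]. Qed.

Definition window_types : seq (nat * nat * ('I_3 * 'I_3)) :=
  [seq (pq, c) | pq <- [seq (p, q) | q <- iota 0 4, p <- iota 0 q],
                 c <- [seq c <- [seq (c1, c2) | c1 <- colours, c2 <- colours] | c.1 != c.2]].

Lemma size_window_types : size window_types = 36.
Proof. by []. Qed.

Lemma mem_window_types p q c1 c2 :
  p < q <= 3 -> c1 != c2 -> (p, q, (c1, c2)) \in window_types.
Proof.
move=> /andP[lt_pq le_q3] neq_c; apply: allpairs_f.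
  by apply/allpairsPdep; exists q, p; rewrite !mem_iota /= ltnS le_q3 lt_pq.
by rewrite mem_filter neq_c allpairs_f ?mem_colours.
Qed.

Section LFreeColouring.

Variables (n : nat) (col : nat -> nat -> 'I_3).
Hypothesis L_free : ~ has_mono_L n 3 col.

Lemma L_free_corner i j i' j' : 0 < i < i' -> 0 < j -> i' <= n -> j' <= n ->
  i + j' = i' + j -> col i j = col i j' -> col i' j' != col i j'.
Proof.
move=> /andP[i_gt0 lt_ii'] j_gt0 le_i'n le_j'n diag eq_ij; apply/eqP => eq_i'j'.
have def_i' : i + (i' - i) = i' by rewrite subnKC // ltnW.
have def_j' : j + (i' - i) = j' by lia.
apply: L_free; exists i, j, (i' - i); rewrite /in_grid def_i' def_j'.
by split; [rewrite subn_gt0 | do 3 (split; first lia); split].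
Qed.

Definition window_type (b : nat) : nat * nat * ('I_3 * 'I_3) :=
  let: (p, q) := equal_pair (fun k => col 1 (b + k)) in
  (p, q, (col 1 (b + q), col (q - p).+1 (b + q))).

Lemma window_typeP b p q c1 c2 : 0 < b -> b + 3 <= n -> window_type b = (p, q, (c1, c2)) ->
  [/\ p < q <= 3, col 1 (b + p) = c1, col 1 (b + q) = c1,
      col (q - p).+1 (b + q) = c2 & c2 != c1].
Proof.
rewrite /window_type => b_gt0 le_bn; have [] := equal_pairP (fun k => col 1 (b + k)).
case: equal_pair => p' q' /= /andP[lt_pq le_q3] eq_pq [<- <- <- <-].
rewrite lt_pq le_q3; split=> //; apply: (L_free_corner (j := b + p')) => //; lia.
Qed.

Lemma window_type_mem b : 0 < b -> b + 3 <= n -> window_type b \in window_types.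
Proof.
move=> b_gt0 le_bn; case E: (window_type b) => [[p q] [c1 c2]].
have [lt_pq _ _ _ neq_c] := window_typeP b_gt0 le_bn E.
by rewrite mem_window_types // eq_sym.
Qed.

Lemma shifted_cell_avoids x y p q c1 c2 : 0 < x < y -> y + 3 <= n ->
  window_type x = (p, q, (c1, c2)) -> window_type y = (p, q, (c1, c2)) ->
  col (q - p + (y - x)).+1 (y + q) != c1 /\ col (q - p + (y - x)).+1 (y + q) != c2.
Proof.
move=> /andP[x_gt0 lt_xy] le_yn Ex Ey.
have [/andP[lt_pq le_q3] x_p _ x_L _] := window_typeP x_gt0 (ltac:(lia) : x + 3 <= n) Ex.
have [_ _ y_q y_L _] := window_typeP (ltn_trans x_gt0 lt_xy) le_yn Ey.
split.
  by rewrite -y_q; apply: (L_free_corner _ _ _ _ _ (etrans x_p (esym y_q))); lia.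
by rewrite -y_L; apply: (L_free_corner _ _ _ _ _ (etrans x_L (esym y_L))); lia.
Qed.

Lemma window_types_no_equal_gaps x y e : 0 < x < y -> 0 < e -> y + e + 3 <= n ->
  window_type (x + e) = window_type x -> window_type y = window_type x ->
  window_type (y + e) = window_type x -> False.
Proof.
move=> /andP[x_gt0 lt_xy] e_gt0 le_yen; case E: (window_type x) => [[p q] [c1 c2]] Exe Ey Eye.
have [/andP[lt_pq le_q3] _ _ _ neq_c] := window_typeP x_gt0 (ltac:(lia) : x + 3 <= n) E.
have [Z1_c1 Z1_c2] := shifted_cell_avoids (x := x) (y := x + e) ltac:(lia) ltac:(lia) E Exe.
have [Z2_c1 Z2_c2] := shifted_cell_avoids (x := y) (y := y + e) ltac:(lia) ltac:(lia) Ey Eye.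
have [W_c1 W_c2] := shifted_cell_avoids (x := x) (y := y + e) ltac:(lia) ltac:(lia) E Eye.
rewrite !addKn in Z1_c1 Z1_c2 Z2_c1 Z2_c2.
have Z1_Z2 := ord3_eq_third neq_c Z1_c2 Z1_c1 Z2_c2 Z2_c1.
have Z2_W := ord3_eq_third neq_c Z2_c2 Z2_c1 W_c2 W_c1.
suff : col (q - p + (y + e - x)).+1 (y + e + q) != col (q - p + e).+1 (y + e + q).
  by rewrite Z2_W eqxx.
by apply: L_free_corner Z1_Z2; lia.
Qed.

End LFreeColouring.

Theorem theorem2p3 :
  forall col : nat -> nat -> 'I_3, has_mono_L 2593 3 col.
Proof.
move=> col; apply: NNPP => L_free.
have types_in : {in iota 0 2590, forall b, window_type col b.+1 \in window_types}.
  by move=> b; rewrite mem_iota => /andP[_ lt_b]; apply: (window_type_mem L_free) => //; lia.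
have few_types : size window_types * 71 < 2590 by rewrite size_window_types.
have [x [y [e [lt_xy e_gt0 lt_ye [Exe Ey Eye]]]]] := fibre_equal_gaps types_in few_types isT.
by apply: (window_types_no_equal_gaps L_free (x := x.+1) (y := y.+1) (e := e)) => //; lia.
Qed.
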